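(* Let $G$ be a Klee-graph. For every $v\in V(G)$ there exists a $v$-join of $G$.
   Context: For a cubic graph $G$ and $v\in V(G)$, a $v$-join of $G$ is a spanning subgraph in which $v$ has degree $3$ and every other vertex has degree $1$. For a cubic graph $G$ and $v\in V(G)$ with neighbours $x_1,x_2,x_3$, $G^v$ denotes the cubic graph obtained by replacing $v$ by a triangle: delete $v$, add new vertices $v_1,v_2,v_3$, the edges $v_1v_2,v_2v_3,v_3v_1$, and the edges $v_ix_i$ for $i=1,2,3$. A graph is a Klee-graph if it is $K_4$, or it equals $H^w$ for some Klee-graph $H$ and some $w\in V(H)$. *)

From mathcomp Require Import all_boot.
Set Implicit Arguments. Unset Strict Implicit. Unset Printing Implicit Defensive.

Section Graphs.
Variable T : finType.
Implicit Types (e : rel T).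

Definition simple_graph e := symmetric e /\ irreflexive e.

Definition deg e (x : T) : nat := #|[set y | e x y]|.

Definition cubic e := simple_graph e /\ forall x, deg e x = 3.

Definition vjoin e (v : T) (S : rel T) :=
  [/\ symmetric S, subrel S e, deg S v = 3 & forall x, x != v -> deg S x = 1].

(* G^w : replace w by a triangle.  Old vertices are [inl a] with a != w;
   the new triangle vertices are [inr x], one for each neighbour x of w
   (the vertex "w_x" joined to x). *)
Definition tri_valid e (w : T) (u : T + T) : bool :=
  match u with inl a => a != w | inr x => e w x end.

Definition tri_type e w := {u : T + T | tri_valid e w u}.

Definition tri_rel0 e (u1 u2 : T + T) : bool :=
  match u1, u2 with
  | inl a, inl b => e a b
  | inl a, inr x => a == x
  | inr x, inl a => a == x
  | inr x, inr y => x != y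
  end.

Definition tri_rel e w : rel (tri_type e w) :=
  fun u1 u2 => tri_rel0 e (val u1) (val u2).
End Graphs.

Definition giso (T1 T2 : finType) (e1 : rel T1) (e2 : rel T2) :=
  exists f : T1 -> T2, bijective f /\ forall x y, e2 (f x) (f y) = e1 x y.

Definition K4rel : rel 'I_4 := fun i j => i != j.

Inductive klee : forall T : finType, rel T -> Prop :=
| klee_K4 (T : finType) (e : rel T) : giso e K4rel -> klee e
| klee_step (H : finType) (eH : rel H) (w : H) (T : finType) (e : rel T) :
    klee eH -> giso e (@tri_rel H eH w) -> klee e.

(* Klee-graphs satisfy a stronger invariant: they are cubic, have a v-join for
   every v, and every edge lies in a perfect matching.  For G = H^w, a v-join or perfect
   matching of H in which w is matched to y lifts to G by joining y to the
   triangle vertex w_y and matching the two other triangle vertices; a w_x-join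
   of G comes from a perfect matching of H through wx, with w_x joined to the
   whole triangle.  An edge of G inside the triangle is avoided by the lift of
   a perfect matching through the edge from w to the remaining neighbour. *)

From mathcomp Require Import all_boot.
Set Implicit Arguments. Unset Strict Implicit. Unset Printing Implicit Defensive.

Definition perfect_matching (T : finType) (e M : rel T) :=
  [/\ symmetric M, subrel M e & forall x, deg M x = 1].

Definition joinable_cubic (T : finType) (e : rel T) :=
  [/\ cubic e, forall v, exists S, vjoin e v S
    & forall a b, e a b -> exists2 M, perfect_matching e M & M a b].

Section Degrees.
Variables T1 T2 : finType.

Lemma eq_deg (R1 R2 : rel T1) x : R1 =2 R2 -> deg R1 x = deg R2 x.
Proof. by move=> eR; apply: eq_card => y; rewrite !inE eR. Qed.

Lemma deg1E (R : rel T1) x : deg R x = 1 -> exists y, forall z, R x z = (z == y).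
Proof.
move=> /eqP /cards1P [y /setP Ry]; exists y => z.
by have := Ry z; rewrite !inE.
Qed.

Lemma deg_inj_onto (R : rel T1) u (f : T1 -> T2) (A : {set T2}) :
  {in [set z | R u z] &, injective f} ->
  (forall z, R u z -> f z \in A) ->
  (forall t, t \in A -> exists2 z, R u z & f z = t) ->
  deg R u = #|A|.
Proof.
move=> f_inj fRA fAR; rewrite /deg -(card_in_imset f_inj).
apply: eq_card => t; apply/imsetP/idP => [[z] | /fAR [z Ruz <-]].
  by rewrite inE => /fRA ? ->.
by exists z; rewrite ?inE.
Qed.

Definition prel (f : T1 -> T2) (S : rel T2) : rel T1 := fun a b => S (f a) (f b).

Lemma deg_prel (f : T1 -> T2) (S : rel T2) x :
  bijective f -> deg (prel f S) x = deg S (f x).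
Proof.
move=> f_bij; have f_inj := bij_inj f_bij; case: f_bij => g fK gK.
apply: (deg_inj_onto (f := f)) => [y z _ _ /f_inj //| z | t]; rewrite inE //.
by move=> St; exists (g t); rewrite /prel gK.
Qed.

Lemma cards3D2 (A : {set T1}) x y :
  #|A| = 3 -> x \in A -> y \in A -> x != y -> #|A :\ x :\ y| = 1.
Proof.
move=> A3 xA yA xy; have yAx : y \in A :\ x by rewrite !inE eq_sym xy.
by move: A3; rewrite (cardsD1 x) xA (cardsD1 y (A :\ x)) yAx => -[].
Qed.

End Degrees.

Lemma joinable_cubic_giso (T1 T2 : finType) (e1 : rel T1) (e2 : rel T2) :
  giso e1 e2 -> joinable_cubic e2 -> joinable_cubic e1.
Proof.
case=> f [f_bij fE] [[[sym2 irr2] cub2] join2 pm2].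
have f_inj := bij_inj f_bij.
have pull_sym S : symmetric S -> symmetric (prel f S).
  by move=> sS a b; rewrite /prel sS.
have pull_sub S : subrel S e2 -> subrel (prel f S) e1.
  by move=> sub a b /sub; rewrite fE.
split; first split; first split.
- by move=> x y; rewrite -!fE sym2.
- by move=> x; rewrite -fE irr2.
- by move=> x; rewrite -(eq_deg x fE) deg_prel.
- move=> v; have [S [sS subS Sv S1]] := join2 (f v).
  exists (prel f S); split; [exact: pull_sym | exact: pull_sub | by rewrite deg_prel |].
  by move=> x xv; rewrite deg_prel // S1 // (inj_eq f_inj).
- move=> a b; rewrite -fE => /pm2 [M [sM subM M1] Mab].
  exists (prel f M) => //; split; [exact: pull_sym | exact: pull_sub | by move=> x; rewrite deg_prel].
Qed.

Lemma joinable_cubic_K4 : joinable_cubic K4rel.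
Proof.
have K4_deg3 (x : 'I_4) (A : {set 'I_4}) : (forall y, (y \in A) = (x != y)) -> #|A| = 3.
  move=> Pe; transitivity #|[set~ x]|; last by rewrite cardsC1 card_ord.
  by apply: eq_card => y; rewrite !inE Pe eq_sym.
split; first split; first split.
- by move=> x y; rewrite /K4rel eq_sym.
- by move=> x; rewrite /K4rel eqxx.
- by move=> x; apply: (K4_deg3 x) => y; rewrite inE.
- move=> v; exists (fun a b => (a != b) && ((a == v) || (b == v))); split.
  + by move=> a b; rewrite eq_sym orbC.
  + by move=> a b /andP [].
  + by apply: (K4_deg3 v) => y; rewrite inE eqxx andbT.
  + move=> x /negbTE xv; transitivity #|[set v]|; last by rewrite cards1.
    apply: eq_card => y.
    by rewrite !inE xv /=; case: (y =P v) => [->|]; rewrite ?xv ?andbF.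
- rewrite /K4rel => a b ab; pose P := [set a; b].
  have P2 : #|P| = 2 by rewrite cards2 ab.
  (* The matching joins [a] with [b] and the two remaining vertices with each other. *)
  exists (fun c d => (c != d) && ((c \in P) == (d \in P))); last first.
    by rewrite ab !inE !eqxx orbT.
  split=> [c d | c d /andP [] // | c].
  + by rewrite eq_sym [(d \in P) == _]eq_sym.
  clearbody P.
  have -> : deg (fun c d => (c != d) && ((c \in P) == (d \in P))) c =
            #|(if c \in P then P else ~: P) :\ c|.
    apply: eq_card => d; rewrite !inE eq_sym.
    by case: (c \in P); rewrite ?inE; case: (d \in P).
  have PC2 : #|~: P| = 2 by rewrite cardsCs setCK card_ord P2.
  case cP : (c \in P).
  + by move: P2; rewrite (cardsD1 c) cP => -[].
  + by move: PC2; rewrite (cardsD1 c) inE cP => -[].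
Qed.

Section TriangleReplacement.
Variables (H : finType) (eH : rel H) (w : H).
Hypotheses (eH_sym : symmetric eH) (eH_irr : irreflexive eH).

Local Notation G := (tri_type eH w).
Local Notation eG := (@tri_rel H eH w).

Definition tri_old b (hb : b != w) : G := exist _ (inl b) hb.
Definition tri_new x (hx : eH w x) : G := exist _ (inr x) hx.

Definition tri_contract (u : G) : H := if val u is inl b then b else w.
Definition tri_proj (u : G) : H := match val u with inl b | inr b => b end.

(* The edge [inl x -- inr x] of the lift stands for the edge [w -- x] of [S]. *)
Definition tri_lift (Q S : rel H) : rel G := fun u1 u2 =>
  match val u1, val u2 with
  | inl b, inl c => S b c
  | inl b, inr x | inr x, inl b => (b == x) && S w x
  | inr x, inr z => Q x z
  end.

Lemma tri_relE : eG =2 tri_lift (fun x z => x != z) eH.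
Proof. by move=> [[a|x] /= ha] [[b|z] /= hb]; rewrite /tri_rel /tri_lift /= ?ha ?hb ?andbT. Qed.

Lemma tri_lift_sym (Q S : rel H) : symmetric Q -> symmetric S -> symmetric (tri_lift Q S).
Proof. by move=> sQ sS [[b|x] hb] [[c|z] hc]; rewrite /tri_lift /= 1?sQ 1?sS. Qed.

Lemma tri_lift_sub (Q S : rel H) : (forall x z, Q x z -> x != z) -> subrel S eH ->
  subrel (tri_lift Q S) (eG).
Proof.
move=> Q_neq subS u1 u2; rewrite tri_relE.
case: u1 u2 => [[b|x] hb] [[c|z] /= hc]; rewrite /tri_lift /=.
- exact: subS.
- by case/andP=> -> _.
- by case/andP=> -> _.
- exact: Q_neq.
Qed.

Lemma deg_tri_lift_old (Q S : rel H) b (hb : b != w) :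
  symmetric S -> subrel S eH -> deg (tri_lift Q S) (tri_old hb) = deg S b.
Proof.
move=> sS subS; apply: (deg_inj_onto (f := tri_contract)).
- move=> [[c|x] /= hc] [[d|z] /= hd]; rewrite !inE /tri_lift /tri_contract /=.
  + by move=> _ _ cd; apply: val_inj; rewrite /= cd.
  + by move=> _ _ /eqP; rewrite (negPf hc).
  + by move=> _ _ /eqP; rewrite eq_sym (negPf hd).
  + by move=> /andP [/eqP bx _] /andP [/eqP bz _] _; apply: val_inj; rewrite /= -bx -bz.
- by move=> [[c|x] hc]; rewrite inE /tri_lift /tri_contract /= => // /andP [/eqP <-]; rewrite sS.
- move=> t; rewrite inE => Sbt; have [tw | tw] := eqVneq t w; last by exists (tri_old tw).
  have Swb : S w b by rewrite sS -tw.
  by exists (tri_new (subS _ _ Swb)); rewrite /tri_lift /= ?eqxx.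
Qed.

Lemma deg_tri_lift_new (Q S : rel H) x (hx : eH w x) : (forall x z, Q x z -> x != z) ->
  deg (tri_lift Q S) (tri_new hx) = #|[set t | (t == x) && S w x || eH w t && Q x t]|.
Proof.
move=> Q_neq; have xw : x != w by apply: contraTneq hx => ->; rewrite eH_irr.
apply: (deg_inj_onto (f := tri_proj)).
- move=> [[c|z] hc] [[d|z'] hd]; rewrite !inE /tri_lift /tri_proj /=.
  + by move=> /andP [/eqP cx _] /andP [/eqP dx _] _; apply: val_inj; rewrite /= cx dx.
  + by move=> /andP [/eqP cx _] /Q_neq xz' cz'; rewrite -cx cz' eqxx in xz'.
  + by move=> /Q_neq xz /andP [/eqP dx _] zd; rewrite zd dx eqxx in xz.
  + by move=> _ _ zz'; apply: val_inj; rewrite /= zz'.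
- move=> [[c|z] /= hc]; rewrite inE /tri_lift /tri_proj /=.
  + by case/andP=> /eqP -> ->; rewrite eqxx.
  + by move=> Qxz; rewrite hc Qxz orbT.
- move=> t; rewrite inE => /orP [/andP [/eqP -> Swx] | /andP [wt Qxt]].
  + by exists (tri_old xw); rewrite /tri_lift /= ?eqxx.
  + by exists (tri_new wt).
Qed.

Hypothesis eH_deg3 : forall x, deg eH x = 3.

Lemma tri_cubic : cubic eG.
Proof.
split; first split.
- by move=> [[a|x] ha] [[b|z] hb]; rewrite /tri_rel /= 1?eH_sym 1?eq_sym.
- by move=> [[a|x] ha]; rewrite /tri_rel /= ?eH_irr ?eqxx.
- move=> u; rewrite (eq_deg u tri_relE); case: u => [[a|x] /= hx].
  + by rewrite (deg_tri_lift_old _ hx).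
  + rewrite (deg_tri_lift_new _ hx) // -(eH_deg3 w).
    apply: eq_card => t; rewrite !inE hx andbT.
    by have [->|] := eqVneq t x; rewrite ?hx ?andbT.
Qed.

Definition match_avoiding (y : H) : rel H := fun x z => [&& x != z, x != y & z != y].
Definition star_at (x : H) : rel H := fun c d => (c != d) && ((c == x) || (d == x)).

Lemma match_avoiding_sym y : symmetric (match_avoiding y).
Proof. by move=> x z; rewrite /match_avoiding eq_sym [(x != y) && _]andbC. Qed.

Lemma match_avoiding_neq y x z : match_avoiding y x z -> x != z.
Proof. by case/and3P. Qed.

Lemma star_at_sym x : symmetric (star_at x).
Proof. by move=> c d; rewrite /star_at eq_sym orbC. Qed.

Lemma star_at_neq x c d : star_at x c d -> c != d.
Proof. by case/andP. Qed.

Section LiftAvoiding.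
Variables (S : rel H) (y : H).
Hypotheses (S_sym : symmetric S) (S_sub : subrel S eH) (Sw : forall z, S w z = (z == y)).

Local Notation L := (tri_lift (match_avoiding y) S).

Lemma deg_tri_lift_avoiding_new x (hx : eH w x) : deg L (tri_new hx) = 1.
Proof.
rewrite (deg_tri_lift_new _ hx) ?Sw; last exact: match_avoiding_neq.
have [<- | xy] := eqVneq x y.
  rewrite -(cards1 x); apply: eq_card => t; rewrite !inE /match_avoiding eqxx andbT.
  by rewrite !andbF orbF.
have wy : eH w y by apply: S_sub; rewrite Sw.
rewrite -(cards3D2 (eH_deg3 w) (x := x) (y := y)) ?inE //.
apply: eq_card => t; rewrite !inE /match_avoiding (negPf xy) andbF /= [x == t]eq_sym.
by case: (t == x); case: (t == y); case: (eH w t).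
Qed.


Lemma perfect_matching_tri_lift_avoiding :
  (forall b, deg S b = 1) -> perfect_matching eG L.
Proof.
move=> S1; split.
- exact: tri_lift_sym (match_avoiding_sym y) S_sym.
- exact: tri_lift_sub (@match_avoiding_neq y) S_sub.
- move=> [[b|x] hx]; first by rewrite (deg_tri_lift_old _ hx).
  exact: deg_tri_lift_avoiding_new.
Qed.

Lemma vjoin_tri_lift_avoiding a (ha : a != w) :
  vjoin eH a S -> vjoin eG (tri_old ha) L.
Proof.
case=> _ _ Sa S1; split.
- exact: tri_lift_sym (match_avoiding_sym y) S_sym.
- exact: tri_lift_sub (@match_avoiding_neq y) S_sub.
- by rewrite (deg_tri_lift_old _ ha).
- move=> [[b|x] hx] ne; last exact: deg_tri_lift_avoiding_new.
  by rewrite (deg_tri_lift_old _ hx) // S1.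
Qed.

End LiftAvoiding.

Lemma vjoin_tri_lift_star M x (hx : eH w x) :
  perfect_matching eH M -> M w x -> vjoin eG (tri_new hx) (tri_lift (star_at x) M).
Proof.
case=> M_sym M_sub M1 Mwx; have [y Mw] := deg1E (M1 w).
have /eqP xy : x == y by rewrite -Mw.
subst y; split.
- exact: tri_lift_sym (star_at_sym x) M_sym.
- exact: tri_lift_sub (@star_at_neq x) M_sub.
- rewrite (deg_tri_lift_new _ hx) ?Mw; last exact: star_at_neq.
  rewrite -(eH_deg3 w); apply: eq_card => t; rewrite !inE /star_at !eqxx andbT /=.
  by have [->|] := eqVneq t x; rewrite ?hx ?andbT.
- move=> [[b|z] hz] ne; first by rewrite (deg_tri_lift_old _ hz).
  have zx : z != x by [].
  rewrite (deg_tri_lift_new _ hz) ?Mw; last exact: star_at_neq.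
  rewrite -(cards1 x); apply: eq_card => t; rewrite !inE /star_at (negPf zx) /=.
  by have [->|] := eqVneq t x; rewrite ?hx ?zx ?andbF.
Qed.

Lemma tri_edge_matchable :
  (forall a b, eH a b -> exists2 M, perfect_matching eH M & M a b) ->
  forall u1 u2, eG u1 u2 -> exists2 M, perfect_matching eG M & M u1 u2.
Proof.
move=> pmH.
have lift a b : eH a b -> exists M y, [/\ perfect_matching eG (tri_lift (match_avoiding y) M),
                                         M a b & forall z, M w z = (z == y)].
  case/pmH=> M [M_sym M_sub M1] Mab; have [y Mw] := deg1E (M1 w).
  by exists M, y; split=> //; apply: perfect_matching_tri_lift_avoiding.
move=> [[a|x] /= ha] [[b|z] /= hb]; rewrite /tri_rel /= => hab.
- have [M [y [pmL Mab _]]] := lift a b hab.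
  by exists (tri_lift (match_avoiding y) M).
- have [M [y [pmL Mwz _]]] := lift w z hb.
  by exists (tri_lift (match_avoiding y) M) => //; rewrite /tri_lift /= hab.
- have [M [y [pmL Mwx _]]] := lift w x ha.
  by exists (tri_lift (match_avoiding y) M) => //; rewrite /tri_lift /= hab.
- have /eqP /cards1P [t Nt] : #|[set t | eH w t] :\ x :\ z| = 1.
    by apply: (cards3D2 (eH_deg3 w)); rewrite ?inE.
  have /setD1P [tz /setD1P [tx]] : t \in [set t | eH w t] :\ x :\ z by rewrite Nt inE.
  rewrite inE => wt; have [M [y [pmL Mwt Mw]]] := lift w t wt.
  have /eqP ty : t == y by rewrite -Mw.
  exists (tri_lift (match_avoiding y) M) => //.
  by rewrite /tri_lift /match_avoiding /= -ty hab eq_sym tx eq_sym tz.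
Qed.

End TriangleReplacement.

Lemma joinable_cubic_tri (H : finType) (eH : rel H) (w : H) :
  joinable_cubic eH -> joinable_cubic (@tri_rel _ eH w).
Proof.
case=> [[[eH_sym eH_irr] eH_deg3] join pm]; split.
- exact: tri_cubic.
- move=> [[a|x] /= hx].
  + have [S vjS] := join a; have [S_sym S_sub _ S1] := vjS.
    have [y Sw] : exists y, forall z, S w z = (z == y) by apply/deg1E/S1; rewrite eq_sym.
    by exists (tri_lift (match_avoiding y) S); apply: vjoin_tri_lift_avoiding.
  + have [M pmM Mwx] := pm w x hx.
    by exists (tri_lift (star_at x) M); apply: vjoin_tri_lift_star.
- exact: tri_edge_matchable.
Qed.

Lemma klee_joinable_cubic (T : finType) (e : rel T) : klee e -> joinable_cubic e.
Proof.
elim=> {T e} [T e iso | H eH w T e _ IH iso].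
- exact: joinable_cubic_giso iso joinable_cubic_K4.
- exact: joinable_cubic_giso iso (joinable_cubic_tri w IH).
Qed.

Theorem mainTheorem6 (T : finType) (e : rel T) :
  klee e -> forall v : T, exists S : rel T, vjoin e v S.
Proof. by case/klee_joinable_cubic. Qed.
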